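(* Let $0<\mathcal{R}_0\le1$ and let $F$ be a convex, nonnegative, differentiable function on $\{x'\in\mathbb{R}^{n-1}:|x'|\le\mathcal{R}_0\}$ with $F(0)=0$. For $r\in(0,\mathcal{R}_0)$ define $$\delta(r)=\max_{|x'|\le r}\frac{F(x')}{|x'|},\qquad \delta_1(r)=\max_{|x'|\le r}|\nabla F(x')|.$$ Then: (a) $\delta_1(r)\to0$ as $r\to0$ if and only if $\delta(r)\to0$ as $r\to0$; (b) $\delta_1$ satisfies the Dini condition at zero if and only if $\delta$ satisfies the Dini condition at zero.
   Context: Class $\mathcal{D}_1$: a function $\sigma:[0,1]\to\mathbb{R}_+$ belongs to $\mathcal{D}_1$ if - $\sigma$ is increasing, $\sigma(0)=0$ and $\sigma(1)=1$; - $\sigma(t)/t$ is summable on $(0,1)$ and decreasing. A function $\zeta$ satisfies the Dini condition at zero if $|\zeta(r)|\le C\sigma(r)$ (for small $r>0$) for some constant $C$ and some $\sigma\in\mathcal{D}_1$. *)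

From HB Require Import structures.
From mathcomp Require Import all_boot all_order all_algebra.
From mathcomp Require Import all_classical all_reals all_analysis.
Set Implicit Arguments. Unset Strict Implicit. Unset Printing Implicit Defensive.
Import Order.TTheory GRing.Theory Num.Theory.
Import numFieldNormedType.Exports.
Local Open Scope classical_set_scope.
Local Open Scope ring_scope.

Definition enorm {R : realType} {m : nat} (v : 'rV[R]_m) : R :=
  Num.sqrt (\sum_(i < m) (v ord0 i) ^+ 2).

Definition grad {R : realType} {m : nat} (F : 'rV[R]_m -> R) (x : 'rV[R]_m)
  : 'rV[R]_m := \row_(i < m) ('D_(delta_mx ord0 i) F x).

Definition cball0 {R : realType} {m : nat} (r : R) : set 'rV[R]_m :=
  [set x | enorm x <= r].

(* delta(r) = max_{|x'| <= r} F(x') / |x'|  (taken as the supremum; the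
   value at x' = 0 is 0/0 = 0 in MathComp, harmless since F >= 0). *)
Definition delta_fun {R : realType} {m : nat} (F : 'rV[R]_m -> R) (r : R) : R :=
  sup [set F x / enorm x | x in cball0 r].

Definition delta1_fun {R : realType} {m : nat} (F : 'rV[R]_m -> R) (r : R) : R :=
  sup [set enorm (grad F x) | x in cball0 r].

Definition classD1 {R : realType} (sigma : R -> R) : Prop :=
  [/\ (forall s t, 0 <= s -> s <= t -> t <= 1 -> sigma s <= sigma t),
      (forall t, 0 <= t -> t <= 1 -> 0 <= sigma t),
      sigma 0 = 0 /\ sigma 1 = 1,
      (lebesgue_measure).-integrable `]0, 1[ (fun t => (sigma t / t)%:E) &
      (forall s t, 0 < s -> s <= t -> t < 1 -> sigma t / t <= sigma s / s)].

Definition dini_at0 {R : realType} (zeta : R -> R) : Prop :=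
  exists C : R, exists2 sigma : R -> R, classD1 sigma &
    \forall r \near 0^'+, `|zeta r| <= C * sigma r.

Definition convex_on {R : realType} {m : nat} (A : set 'rV[R]_m)
  (F : 'rV[R]_m -> R) : Prop :=
  forall x y (t : R), A x -> A y -> 0 <= t <= 1 ->
    F (t *: x + (1 - t) *: y) <= t * F x + (1 - t) * F y.

From HB Require Import structures.
From mathcomp Require Import all_boot all_order all_algebra.
From mathcomp Require Import all_classical all_reals all_analysis.
From mathcomp Require Import ring lra.
Set Implicit Arguments.
Unset Strict Implicit.
Unset Printing Implicit Defensive.
Import Order.TTheory GRing.Theory Num.Theory.
Import numFieldNormedType.Exports.
Local Open Scope classical_set_scope.
Local Open Scope ring_scope.

(** Convexity and [F 0 = 0] give the supporting-hyperplane inequality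
    [F x <= <grad F x, x> <= |grad F x| |x|], whence [delta <= delta_1].
    Conversely, for [|x| <= r] put [y = x + r grad F x / |grad F x|]; the
    supporting hyperplane at [x] gives
    [r |grad F x| <= F y - F x <= F y <= 2 r delta(2 r)],
    whence [delta_1(r) <= 2 delta(2 r)].  Convergence to 0 and the Dini
    condition both survive such two-sided comparisons, the latter because
    [sigma(2 r) <= 2 sigma(r)] for [sigma] in D_1.  Continuity of [F] at 0
    keeps the suprema finite, so the inequalities hold for all small [r]. *)

Section EuclideanNorm.
Context {R : realType} {m : nat}.
Implicit Types (x y : 'rV[R]_m) (c : R).

Definition dotr x y : R := \sum_(i < m) x ord0 i * y ord0 i.

Lemma dotrZr c x y : dotr x (c *: y) = c * dotr x y.
Proof. by rewrite /dotr mulr_sumr; apply: eq_bigr => i _; rewrite mxE; ring. Qed.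

Lemma dotrZl c x y : dotr (c *: x) y = c * dotr x y.
Proof. by rewrite /dotr mulr_sumr; apply: eq_bigr => i _; rewrite mxE; ring. Qed.

Lemma dotrC x y : dotr x y = dotr y x.
Proof. by apply: eq_bigr => i _; rewrite mulrC. Qed.

Lemma dotr0l y : dotr 0 y = 0.
Proof. by rewrite /dotr big1 // => i _; rewrite mxE mul0r. Qed.

Lemma enorm_ge0 x : 0 <= enorm x.
Proof. exact: sqrtr_ge0. Qed.

Lemma enorm_sqr x : enorm x ^+ 2 = dotr x x.
Proof.
rewrite /enorm sqr_sqrtr; last by apply: sumr_ge0 => i _; exact: sqr_ge0.
by apply: eq_bigr => i _; rewrite expr2.
Qed.

Lemma enorm0 : enorm (0 : 'rV[R]_m) = 0.
Proof. by rewrite /enorm big1 ?sqrtr0 // => i _; rewrite mxE expr0n. Qed.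

Lemma enorm_eq0 x : enorm x = 0 -> x = 0.
Proof.
move=> x0; have : dotr x x = 0 by rewrite -enorm_sqr x0 expr0n.
move=> /psumr_eq0P xx0; apply/rowP => j; rewrite mxE; apply/eqP.
by rewrite -sqrf_eq0 expr2 xx0 // => i _; rewrite -expr2 sqr_ge0.
Qed.

Lemma enormZ c x : enorm (c *: x) = `|c| * enorm x.
Proof.
rewrite /enorm -sqrtr_sqr -sqrtrM ?sqr_ge0 // mulr_sumr.
by congr Num.sqrt; apply: eq_bigr => i _; rewrite mxE exprMn.
Qed.

Lemma enorm_scale_unit c x : 0 <= c -> enorm x != 0 ->
  enorm ((c / enorm x) *: x) = c.
Proof.
by move=> c0 x0; rewrite enormZ ger0_norm ?divr_ge0 ?enorm_ge0 // divfK.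
Qed.

Lemma dotr_le_sqr x y : 2 * dotr x y <= enorm x ^+ 2 + enorm y ^+ 2.
Proof.
have : 0 <= \sum_(i < m) (x ord0 i - y ord0 i) ^+ 2.
  by apply: sumr_ge0 => i _; exact: sqr_ge0.
suff -> : \sum_(i < m) (x ord0 i - y ord0 i) ^+ 2 =
          enorm x ^+ 2 + enorm y ^+ 2 - 2 * dotr x y by rewrite subr_ge0.
rewrite !enorm_sqr /dotr mulr_sumr -!big_split -sumrN -big_split /=.
by apply: eq_bigr => i _; ring.
Qed.

Lemma cauchy_schwarz x y : dotr x y <= enorm x * enorm y.
Proof.
have [/enorm_eq0 ->|x0] := eqVneq (enorm x) 0.
  by rewrite dotr0l enorm0 mul0r.
have [/enorm_eq0 ->|y0] := eqVneq (enorm y) 0.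
  by rewrite dotrC dotr0l enorm0 mulr0.
(* Apply [dotr_le_sqr] to [|y| x] and [|x| y], which have equal norms. *)
have := dotr_le_sqr (enorm y *: x) (enorm x *: y).
rewrite dotrZl dotrZr !enormZ !ger0_norm ?enorm_ge0 //.
have xy : 0 < enorm x * enorm y by rewrite mulr_gt0 // lt_def ?x0 ?y0 enorm_ge0.
have -> : (enorm y * enorm x) ^+ 2 + (enorm x * enorm y) ^+ 2 =
          (2 * (enorm x * enorm y)) * (enorm x * enorm y) by ring.
have -> : 2 * (enorm y * (enorm x * dotr x y)) =
          (2 * (enorm x * enorm y)) * dotr x y by ring.
by rewrite ler_pM2l // mulr_gt0.
Qed.

Lemma enormD x y : enorm (x + y) <= enorm x + enorm y.
Proof.
rewrite -(ler_pXn2r (_ : (0 < 2)%N)) ?nnegrE ?addr_ge0 ?enorm_ge0 //.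
have -> : enorm (x + y) ^+ 2 = enorm x ^+ 2 + 2 * dotr x y + enorm y ^+ 2.
  rewrite !enorm_sqr /dotr mulr_sumr -!big_split /=.
  by apply: eq_bigr => i _; rewrite !mxE; ring.
have := cauchy_schwarz x y; rewrite sqrrD; lra.
Qed.

Lemma mx_norm_le_enorm x : `|x| <= enorm x.
Proof.
rewrite [`|x|]mx_normrE; apply: bigmax_le => [|[i j] _]; first exact: enorm_ge0.
rewrite /= (ord1 i) /enorm -sqrtr_sqr ler_sqrt; last first.
  by apply: sumr_ge0 => k _; exact: sqr_ge0.
rewrite (bigD1 j) //= lerDl; apply: sumr_ge0 => k _; exact: sqr_ge0.
Qed.

End EuclideanNorm.

Section ConvexDerivative.
Context {R : realType} {m : nat}.
Implicit Types (A : set 'rV[R]_m) (F : 'rV[R]_m -> R) (x y v : 'rV[R]_m).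

Lemma derive_grad F x v : differentiable F x -> 'D_v F x = dotr (grad F x) v.
Proof.
move=> dF; rewrite deriveE // {1}(row_sum_delta v) linear_sum.
by apply: eq_bigr => i _; rewrite linearZ /= -deriveE // mxE mulrC.
Qed.

Lemma convex_on_derive_le A F x y : convex_on A F -> differentiable F x ->
  A x -> A y -> 'D_(y - x) F x <= F y - F x.
Proof.
move=> cvxF dF Ax Ay.
have cvgF : cvg ((fun h : R => h^-1 *: ((F \o shift x) (h *: (y - x)) - F x))
                 @ 0^') by exact: diff_derivable.
rewrite /derive cvg_at_rightE //; apply: limr_le.
  by apply/cvg_ex; eexists; apply: cvg_dnbhs_at_right; exact: cvgF.
near=> h.
have h0 : 0 < h by near: h; exact: nbhs_right_gt.
have h1 : h < 1 by near: h; exact: nbhs_right_lt.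
rewrite /= -[h^-1 *: _]/(h^-1 * _).
have -> : h *: (y - x) + x = h *: y + (1 - h) *: x.
  by rewrite scalerBr scalerBl scale1r -addrA [- _ + x]addrC.
have := cvxF y x h Ay Ax; rewrite (ltW h0) (ltW h1) => /(_ isT) Fh.
rewrite mulrC ler_pdivrMr //; lra.
Unshelve. all: by end_near.
Qed.

Lemma convex_on_scale_le A F z t : convex_on A F -> A 0 -> A z -> F 0 = 0 ->
  0 <= t <= 1 -> F (t *: z) <= t * F z.
Proof.
move=> cvxF A0 Az F0 t01.
by have := cvxF z 0 t Az A0 t01; rewrite scaler0 addr0 F0 mulr0 addr0.
Qed.

End ConvexDerivative.

Section AtRight0.
Context {R : realType}.
Implicit Types (f g sigma : R -> R) (P : R -> Prop).

Lemma near_at_right0P P : (\forall r \near 0^'+, P r) <->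
  exists2 e, 0 < e & forall r, 0 < r -> r < e -> P r.
Proof.
split.
  rewrite near_withinE => /nbhs_ballP [e e0 eP]; exists e => // r r0 re.
  by apply: eP => //; rewrite /ball /= sub0r normrN gtr0_norm.
move=> [e e0 eP]; near=> r; apply: eP.
  by near: r; exact: nbhs_right_gt.
by near: r; exact: nbhs_right_lt.
Unshelve. all: by end_near.
Qed.

Lemma near_at_right0_scale k P : 0 < k ->
  (\forall r \near 0^'+, P r) -> \forall r \near 0^'+, P (k * r).
Proof.
move=> k0 /near_at_right0P [e e0 eP]; apply/near_at_right0P.
exists (e / k); first exact: divr_gt0.
by move=> r r0 rek; apply: eP; rewrite ?mulr_gt0 // mulrC -ltr_pdivlMr.
Qed.

Lemma cvg_at_right0_le k f g : 0 < k ->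
  (\forall r \near 0^'+, `|f r| <= k * `|g r|) ->
  g r @[r --> 0^'+] --> 0 -> f r @[r --> 0^'+] --> 0.
Proof.
move=> k0 fg /cvgr0Pnorm_lt g0; apply/cvgr0Pnorm_lt => eps eps0.
have := g0 (eps / k) (divr_gt0 eps0 k0); apply: filterS2 fg => r fgr gr.
by apply: le_lt_trans fgr _; rewrite mulrC -ltr_pdivlMr.
Qed.

Lemma cvg_at_right0_scale k f : 0 < k ->
  f r @[r --> 0^'+] --> 0 -> f (k * r) @[r --> 0^'+] --> 0.
Proof.
move=> k0 /cvgr0Pnorm_lt f0; apply/cvgr0Pnorm_lt => eps eps0.
exact: near_at_right0_scale (f0 _ eps0).
Qed.

Lemma classD1_scale_le sigma k r : classD1 sigma -> 1 <= k -> 0 < r ->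
  k * r < 1 -> sigma (k * r) <= k * sigma r.
Proof.
move=> [_ _ _ _ decr] k1 r0 kr1.
have kr0 : 0 < k * r by rewrite mulr_gt0 // (lt_le_trans ltr01).
have := decr r (k * r) r0 (ler_peMl (ltW r0) k1) kr1.
have -> : k * sigma r = sigma r / r * (k * r) by field; rewrite gt_eqF.
by move=> decr_kr; rewrite -ler_pdivrMr.
Qed.

Lemma dini_at0_le k f g : 0 <= k ->
  (\forall r \near 0^'+, `|f r| <= k * `|g r|) -> dini_at0 g -> dini_at0 f.
Proof.
move=> k0 fg [C [sigma sigmaD1 g_sigma]]; exists (k * C); exists sigma => //.
apply: filterS2 fg g_sigma => r fgr gr.
by apply: le_trans fgr _; rewrite -mulrA ler_wpM2l.
Qed.

Lemma dini_at0_scale k f : 1 <= k -> dini_at0 f -> dini_at0 (fun r => f (k * r)).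
Proof.
move=> k1 [C [sigma sigmaD1 f_sigma]]; have k0 : 0 < k by lra.
exists (k * `|C|); exists sigma => //.
have [_ sigma_ge0 _ _ _] := sigmaD1.
have kr1 := near_at_right0_scale k0 (nbhs_right_lt (@ltr01 R)).
apply: filterS3 (nbhs_right_gt 0) kr1 (near_at_right0_scale k0 f_sigma).
move=> r r0 kr1r fkr; apply: le_trans fkr _.
have skr : 0 <= sigma (k * r) by apply: sigma_ge0; rewrite ?mulr_ge0 ?ltW.
apply: le_trans (ler_wpM2r skr (ler_norm C)) _.
by rewrite -mulrA mulrCA ler_wpM2l // classD1_scale_le.
Qed.

Lemma cvg_dini_at0_dilation_equiv k f g : 1 <= k ->
  (\forall r \near 0^'+, 0 <= f r <= g r /\ g r <= k * f (k * r)) ->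
  (g r @[r --> 0^'+] --> 0 <-> f r @[r --> 0^'+] --> 0) /\
  (dini_at0 g <-> dini_at0 f).
Proof.
move=> k1 fg; have k0 : 0 < k by lra.
have f_le_g : \forall r \near 0^'+, `|f r| <= 1 * `|g r|.
  by apply: filterS fg => r [/andP [f0 fg] _]; rewrite mul1r !ger0_norm //; lra.
have g_le_f : \forall r \near 0^'+, `|g r| <= k * `|f (k * r)|.
  apply: filterS2 fg (near_at_right0_scale k0 fg) => r [/andP [f0 fg] gf].
  by move=> [/andP [fk0 _] _]; rewrite !ger0_norm //; lra.
split; split.
- exact: (cvg_at_right0_le ltr01 f_le_g).
- by move=> /(cvg_at_right0_scale k0); apply: cvg_at_right0_le k0 g_le_f.
- exact: (dini_at0_le ler01 f_le_g).
- by move=> /(dini_at0_scale k1); apply: dini_at0_le (ltW k0) g_le_f.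
Qed.

End AtRight0.

Lemma continuous0_le1_on_ball {R : realType} {m : nat} (F : 'rV[R]_m -> R) :
  {for 0, continuous F} -> F 0 = 0 ->
  exists2 e, 0 < e & forall x, enorm x <= e -> F x <= 1.
Proof.
move=> /cvgrPdist_lt /(_ 1 ltr01) /nbhs_normP [e /= e0 eF] F0.
exists (e / 2) => [|x xe]; first exact: divr_gt0.
have := eF x; rewrite /= sub0r normrN F0 sub0r normrN => Fx.
apply: ltW (le_lt_trans (ler_norm _) (Fx _)).
apply: le_lt_trans (mx_norm_le_enorm x) (le_lt_trans xe _).
by rewrite ltr_pdivrMr //; lra.
Qed.

Section DeltaBounds.
Context {R : realType} {m : nat}.
Variables (R0 e : R) (F : 'rV[R]_m -> R).
Implicit Types (r : R) (x y : 'rV[R]_m).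
Hypotheses (e_gt0 : 0 < e) (e_le_R0 : e <= R0).
Hypothesis cvxF : convex_on (cball0 R0) F.
Hypothesis F_ge0 : forall x, enorm x <= R0 -> 0 <= F x.
Hypothesis dF : forall x, enorm x <= R0 -> differentiable F x.
Hypothesis F0 : F 0 = 0.
Hypothesis F_le1 : forall x, enorm x <= e -> F x <= 1.

Let ball0 : cball0 R0 (0 : 'rV[R]_m).
Proof. by rewrite /cball0 /= enorm0 (le_trans (ltW e_gt0) e_le_R0). Qed.

Lemma ratio_le_inv x : enorm x <= e -> F x / enorm x <= e^-1.
Proof.
move=> xe; have [->|x0] := eqVneq (enorm x) 0.
  by rewrite invr0 mulr0 invr_ge0 ltW.
have x_gt0 : 0 < enorm x by rewrite lt_def x0 enorm_ge0.
set z := (e / enorm x) *: x.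
have ze : enorm z = e by rewrite enorm_scale_unit ?ltW.
have t01 : 0 <= enorm x / e <= 1.
  by rewrite divr_ge0 ?enorm_ge0 ?(ltW e_gt0) //= ler_pdivrMr ?mul1r.
have zR0 : cball0 R0 z by rewrite /cball0 /= ze.
have Fx : F x <= enorm x / e * F z.
  have {1}-> : x = (enorm x / e) *: z.
    by rewrite /z scalerA mulrA divfK ?gt_eqF // mulfV ?scale1r.
  exact: convex_on_scale_le cvxF ball0 zR0 F0 t01.
rewrite ler_pdivrMr // mulrC; apply: le_trans Fx _.
by rewrite ler_piMr ?divr_ge0 ?enorm_ge0 ?(ltW e_gt0) // F_le1 ?ze.
Qed.

Lemma delta_ubound r : r <= e -> has_ubound [set F x / enorm x | x in cball0 r].
Proof.
by move=> re; exists e^-1 => _ [x xr <-]; apply: ratio_le_inv; exact: le_trans re.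
Qed.

Lemma ratio_le_delta r x : r <= e -> enorm x <= r ->
  F x / enorm x <= delta_fun F r.
Proof.
by move=> re xr; apply: (ub_le_sup (delta_ubound re)); exists x.
Qed.

Lemma delta_ge0 r : 0 <= r -> r <= e -> 0 <= delta_fun F r.
Proof.
move=> r0 re; have := ratio_le_delta (x := 0) re.
by rewrite enorm0 invr0 mulr0; apply.
Qed.

Lemma F_le_delta r y : 0 <= r -> r <= e -> enorm y <= r ->
  F y <= delta_fun F r * enorm y.
Proof.
move=> r0 re yr; have [/enorm_eq0 ->|y0] := eqVneq (enorm y) 0.
  by rewrite F0 enorm0 mulr0.
by rewrite -ler_pdivrMr ?ratio_le_delta // lt_def y0 enorm_ge0.
Qed.

Lemma F_le_grad x : enorm x <= R0 -> F x <= enorm (grad F x) * enorm x.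
Proof.
move=> xR0; have := convex_on_derive_le cvxF (dF xR0) xR0 ball0.
rewrite (derive_grad _ (dF xR0)) sub0r dotrC -scaleN1r dotrZl F0 dotrC.
have := cauchy_schwarz (grad F x) x; lra.
Qed.

Lemma grad_le_delta r x : 0 < r -> 2 * r <= e -> enorm x <= r ->
  enorm (grad F x) <= 2 * delta_fun F (2 * r).
Proof.
move=> r0 re xr; set g := grad F x.
have d0 : 0 <= delta_fun F (2 * r) by rewrite delta_ge0 // mulr_ge0 ?ltW.
have [-> | g0] := eqVneq (enorm g) 0; first by rewrite mulr_ge0.
set v := (r / enorm g) *: g.
have vr : enorm v = r by rewrite enorm_scale_unit ?ltW.
have xvr : enorm (x + v) <= 2 * r by apply: le_trans (enormD _ _) _; lra.
have xR0 : enorm x <= R0 by have := e_le_R0; lra.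
have xvR0 : enorm (x + v) <= R0 by have := e_le_R0; lra.
have := convex_on_derive_le cvxF (dF xR0) xR0 xvR0.
rewrite addrC addKr (derive_grad _ (dF xR0)) dotrZr -enorm_sqr.
rewrite expr2 mulrA divfK //.
have := F_le_delta (mulr_ge0 (ler0n _ 2) (ltW r0)) re xvr.
have := ler_wpM2l d0 xvr; have := F_ge0 xR0.
rewrite -/g => Fx dxv Fxv slope; rewrite -(ler_pM2l r0); lra.
Qed.

Lemma delta1_le_delta r : 0 < r -> 2 * r <= e ->
  delta1_fun F r <= 2 * delta_fun F (2 * r).
Proof.
move=> r0 re; apply: ge_sup.
  by exists (enorm (grad F 0)), 0; rewrite // /cball0 /= enorm0 ltW.
by move=> _ [x xr <-]; exact: grad_le_delta.
Qed.

Lemma delta_le_delta1 r : 0 < r -> 2 * r <= e -> delta_fun F r <= delta1_fun F r.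
Proof.
move=> r0 re; have rR0 : r <= R0 by have := e_le_R0; lra.
have grad_ub : has_ubound [set enorm (grad F x) | x in cball0 r].
  by exists (2 * delta_fun F (2 * r)) => _ [x xr <-]; exact: grad_le_delta.
apply: ge_sup.
  by exists (F 0 / enorm (0 : 'rV[R]_m)), 0; rewrite // /cball0 /= enorm0 ltW.
move=> _ [x xr <-].
have grad_le : enorm (grad F x) <= delta1_fun F r.
  by apply: (ub_le_sup grad_ub); exists x.
apply: le_trans grad_le.
have [->|x0] := eqVneq (enorm x) 0; first by rewrite invr0 mulr0 enorm_ge0.
rewrite ler_pdivrMr ?lt_def ?x0 ?enorm_ge0 // F_le_grad //.
exact: le_trans rR0.
Qed.

Lemma delta_delta1_near0 : \forall r \near 0^'+,
  0 <= delta_fun F r <= delta1_fun F r /\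
  delta1_fun F r <= 2 * delta_fun F (2 * r).
Proof.
apply/near_at_right0P; exists (e / 2) => [|r r0 re2]; first exact: divr_gt0.
have re : 2 * r <= e by rewrite mulrC -ler_pdivlMr // ltW.
have r_le_e : r <= e by lra.
by rewrite delta_ge0 ?(ltW r0) // delta_le_delta1 // delta1_le_delta.
Qed.

End DeltaBounds.

Theorem lemma2p1 (R : realType) (n : nat) (R0 : R)
  (F : 'rV[R]_(n.-1) -> R) :
  (1 < n)%N ->
  0 < R0 -> R0 <= 1 ->
  convex_on (cball0 R0) F ->
  (forall x, enorm x <= R0 -> 0 <= F x) ->
  (forall x, enorm x <= R0 -> differentiable F x) ->
  F 0 = 0 ->
  ((delta1_fun F r @[r --> 0^'+] --> 0) <-> (delta_fun F r @[r --> 0^'+] --> 0))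
  /\ (dini_at0 (delta1_fun F) <-> dini_at0 (delta_fun F)).
Proof.
move=> _ R0_gt0 _ cvxF F_ge0 dF F0.
have F_cont0 : {for 0, continuous F}.
  by apply/differentiable_continuous/dF; rewrite enorm0 ltW.
have [e e_gt0 F_le1] := continuous0_le1_on_ball F_cont0 F0.
set e' := Num.min e R0.
have e'_gt0 : 0 < e' by rewrite lt_min e_gt0.
have e'_le_R0 : e' <= R0 by rewrite ge_min lexx orbT.
have F_le1' x : enorm x <= e' -> F x <= 1.
  by move=> xe'; apply: F_le1; apply: le_trans xe' _; rewrite ge_min lexx.
apply: (cvg_dini_at0_dilation_equiv (k := 2)); first by rewrite ler1n.
exact: delta_delta1_near0 e'_gt0 e'_le_R0 cvxF F_ge0 dF F0 F_le1'.
Qed.
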